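(* Consider an SDE on $\mathbf{R}^d$ with locally Lipschitz coefficients and its maximal flow $(\phi,\tau)$. Let $U_1\subset U_2\subset\cdots$ be bounded open subsets of $\mathbf{R}^d$ with $\bigcup_n U_n=\mathbf{R}^d$. For a compact set $K\subset\mathbf{R}^d$ set $\tau^K_n:=\inf\{t>0:\phi_t(K)\not\subseteq U_n\}$ (with $\tau_0^K:=0$) and $\tau^K:=\inf_{x\in K}\tau(x)$. (i) Suppose there are nonnegative sequences $(a_n),(b_n)$ with $\sum_n a_n=\infty$ and $\sum_n b_n<\infty$ such that for all $n$, $$\mathbf P\{\tau^K_n-\tau^K_{n-1}\le a_n,\ \tau^K_{n-1}<\infty\}\le b_n.$$ Then $\tau^K=\infty$ almost surely. If this holds for every compact $K$, the SDE is strongly complete. (ii) Conversely, let $(a_n),(b_n)$ be nonnegative summable sequences and let $T_1,T_2,\dots$ be finite random times with $\tau^K\le\sum_j T_j$. If $\mathbf P\{T_n\ge a_n\}\le b_n$ for all $n$, then $\tau^K<\infty$ almost surely.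
   Context: Let $(\Omega,\mathcal F,\mathbf P)$ be a probability space. For an SDE on $\mathbf{R}^d$ with locally Lipschitz coefficients driven by independent Brownian motions, a maximal flow is a pair $(\phi,\tau)$ with $\tau:\mathbf{R}^d\times\Omega\to(0,\infty]$ and $\phi_t(x,\omega)$ defined for $t<\tau(x,\omega)$, such that for each $x$, $\phi_\cdot(x)$ solves the SDE from $x$ on $[0,\tau(x))$; $(t,x)\mapsto\phi_t(x,\omega)$ is continuous on $\{t<\tau(x,\omega)\}$; and $\limsup_{t\to\tau(x,\omega)}|\phi_t(x,\omega)|=\infty$ on $\{\tau(x)<\infty\}$. The SDE is strongly complete if there is a set $\Omega_0$ of full probability with $\tau(x,\omega)=\infty$ for all $x$ and all $\omega\in\Omega_0$. *)

From HB Require Import structures.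
From mathcomp Require Import all_boot all_order all_algebra.
From mathcomp Require Import all_classical all_reals all_analysis.
Set Implicit Arguments. Unset Strict Implicit. Unset Printing Implicit Defensive.
Import Order.TTheory GRing.Theory Num.Theory.
Import numFieldNormedType.Exports.
Local Open Scope classical_set_scope.
Local Open Scope ring_scope.

Section Defs.
Variables (R : realType) (d : nat) (d0 : measure_display) (Omega : measurableType d0).
Local Notation V := 'rV[R]_d.

(* Properties of a maximal flow (phi, tau) that do not refer to the SDE:
   phi t x w is meaningful only for 0 <= t < tau x w. *)
Definition flow_properties (phi : R -> V -> Omega -> V) (tau : V -> Omega -> \bar R) :=
  forall w : Omega,
    (forall x, (0 < tau x w)%E) /\
    (forall x, phi 0 x w = x) /\
    {within [set p : R * V | 0 <= p.1 /\ (p.1%:E < tau p.2 w)%E],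
       continuous (fun p : R * V => phi p.1 p.2 w)} /\
    (forall x, (tau x w < +oo)%E ->
       forall (M e : R), 0 < e -> exists t : R,
         [/\ 0 <= t, fine (tau x w) - e < t, (t%:E < tau x w)%E & M < `|phi t x w|]).

Definition exhaustion (U : nat -> set V) :=
  (forall n, (0 < n)%N -> [/\ open (U n), bounded_set (U n) & U n `<=` U n.+1]) /\
  \bigcup_(n in [set n : nat | (0 < n)%N]) U n = setT.

Definition tauK (tau : V -> Omega -> \bar R) (K : set V) (w : Omega) : \bar R :=
  ereal_inf ((fun x => tau x w) @` K).

(* tau^K_n := inf {t > 0 : phi_t(K) not contained in U_n} (t ranging where
   phi_t(K) is defined, i.e. t < tau^K; inf of the empty set is +oo);
   tau^K_0 := 0. *)
Definition exitK (phi : R -> V -> Omega -> V) (tau : V -> Omega -> \bar R)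
    (U : nat -> set V) (K : set V) (n : nat) (w : Omega) : \bar R :=
  if n is 0 then 0%E else
  ereal_inf [set t%:E | t in [set t : R |
     0 < t /\ (t%:E < tauK tau K w)%E /\ exists2 x, K x & ~ U n (phi t x w)]].

Definition strongly_complete (P : probability Omega R) (tau : V -> Omega -> \bar R) :=
  exists Omega0 : set Omega, [/\ measurable Omega0, P Omega0 = 1%E &
     forall x w, Omega0 w -> tau x w = +oo%E].

(* Hypothesis of part (i) for the compact K.  "P{A} <= b" is read as an
   outer-probability bound: A is contained in a measurable set of probability <= b
   (equivalent to P A <= b when A is measurable). *)
Definition hyp_i (P : probability Omega R) (phi : R -> V -> Omega -> V)
    (tau : V -> Omega -> \bar R) (U : nat -> set V) (K : set V) :=
  exists a b : nat -> R,
    [/\ (forall n, 0 <= a n), (forall n, 0 <= b n),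
        (\sum_(1 <= n <oo) (a n)%:E = +oo)%E,
        (\sum_(1 <= n <oo) (b n)%:E < +oo)%E &
        forall n, (0 < n)%N -> exists E : set Omega,
          [/\ measurable E,
              [set w | (exitK phi tau U K n w - exitK phi tau U K n.-1 w <= (a n)%:E)%E
                       /\ (exitK phi tau U K n.-1 w < +oo)%E] `<=` E &
              (P E <= (b n)%:E)%E]].

End Defs.

(* Part (i): by Borel-Cantelli, almost surely the increments of the exit times
   tau^K_n eventually exceed a_n.  If tau^K were finite, every exit time would
   be at most tau^K: the flow of K cannot stay in a bounded set up to tau^K,
   since otherwise each tau(x), x in K, exceeds tau^K by the blow-up property,
   uniformly so by continuity of the flow and compactness of K.  Telescoping
   then bounds the tail of the divergent series sum a_n by tau^K.
   Part (ii): by Borel-Cantelli T_n < a_n eventually, so sum T_n is finite. *)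

From HB Require Import structures.
From mathcomp Require Import all_boot all_order all_algebra.
From mathcomp Require Import all_classical all_reals all_analysis.
Import Order.TTheory GRing.Theory Num.Theory.
Import numFieldNormedType.Exports.
Local Open Scope classical_set_scope.
Local Open Scope ring_scope.
Set Implicit Arguments. Unset Strict Implicit. Unset Printing Implicit Defensive.

Section series.
Variable R : realType.

Lemma nneseries_eventually_le_lty (u v : nat -> R) (N : nat) :
  (forall n, (0 < n)%N -> 0 <= u n) -> (forall n, 0 <= v n) ->
  (forall n, (N < n)%N -> u n <= v n) ->
  (\sum_(1 <= n <oo) (v n)%:E < +oo -> \sum_(1 <= n <oo) (u n)%:E < +oo)%E.
Proof.
move=> u0 v0 uv vfin.
have vtail : (\sum_(N.+1 <= n <oo) (v n)%:E <= \sum_(1 <= n <oo) (v n)%:E)%E.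
  rewrite [leRHS](nneseries_split 1 N) => [|k _]; last by rewrite lee_fin.
  by rewrite lee_paddl // sume_ge0 // => k _; rewrite lee_fin.
rewrite (nneseries_split 1 N); last by move=> k k1; rewrite lee_fin u0.
rewrite sumEFin lte_add_pinfty ?ltry // add1n.
apply: le_lt_trans (le_lt_trans vtail vfin).
rewrite eseries_cond [leRHS]eseries_cond.
apply: lee_nneseries => [i _ /andP[_ Ni]|i /andP[_ Ni]]; rewrite lee_fin.
  by rewrite u0 // (leq_ltn_trans _ Ni).
exact: uv.
Qed.

Lemma nneseries_le_increments_lty (a f : nat -> R) (N : nat) (s : R) :
  (forall n, 0 <= a n) -> (forall m, f m <= s) ->
  (forall n, (N < n)%N -> a n <= f n - f n.-1) ->
  (\sum_(1 <= n <oo) (a n)%:E < +oo)%E.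
Proof.
move=> a0 fs af.
have tele M : \sum_(N.+1 <= k < N.+1 + M) a k <= f (N + M)%N - f N.
  elim: M => [|M IH]; first by rewrite !addn0 big_geq // subrr.
  rewrite addnS big_nat_recr ?leq_addr //= addnS.
  apply: le_trans (lerD IH (af _ (leq_addr _ _))) _.
  by rewrite addSn /= addrC addrA subrK.
have tail : (\sum_(N.+1 <= k <oo) (a k)%:E <= (s - f N)%:E)%E.
  apply: lime_le; first by apply: is_cvg_nneseries => n _ _; rewrite lee_fin.
  near=> M; have NM : (N.+1 <= M)%N by near: M; exists N.+1.
  rewrite -(subnKC NM) sumEFin lee_fin (le_trans (tele _)) // lerD2r.
  exact: fs.
rewrite (nneseries_split 1 N) => [|k _]; last by rewrite lee_fin.
by rewrite sumEFin add1n lte_add_pinfty ?ltry // (le_lt_trans tail) ?ltry.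
Unshelve. all: by end_near. Qed.
End series.

Section borel_cantelli.
Context d (Omega : measurableType d) (R : realType) (mu : {measure set Omega -> \bar R}).

Lemma ae_eventually_notin (E : nat -> set Omega) :
  (forall n, measurable (E n)) -> (\sum_(n <oo) mu (E n) < +oo)%E ->
  {ae mu, forall w, exists N, forall n, (N <= n)%N -> ~ E n w}.
Proof.
move=> mE PE; exists (lim_sup_set E); split.
- by apply: bigcapT_measurable => N; apply: bigcup_measurable => n _.
- exact: lim_sup_set_cvg0.
move=> w /= /forallNP Ew N _; have /existsNP[n /not_implyP[Nn /contrapT Enw]] := Ew N.
by exists n.
Qed.

Lemma ae_eventually_notin_le (E : nat -> set Omega) (b : nat -> R) :
  (forall n, 0 <= b n) -> (\sum_(1 <= n <oo) (b n)%:E < +oo)%E ->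
  (forall n, (0 < n)%N -> measurable (E n) /\ (mu (E n) <= (b n)%:E)%E) ->
  {ae mu, forall w, exists N, forall n, (N < n)%N -> ~ E n w}.
Proof.
move=> b0 bfin EP.
pose E' n := if n is 0 then set0 else E n.
have mE' n : measurable (E' n) by case: n => [|n] //=; have [] := EP n.+1 isT.
have PE' : (\sum_(n <oo) mu (E' n) < +oo)%E.
  apply: le_lt_trans (lee_nneseries (v := fun n => (b n)%:E) _ _) _ => //.
  - by case=> [|n] _ /=; [rewrite measure0 lee_fin | have [] := EP n.+1 isT].
  by rewrite nneseries_recl ?lte_add_pinfty ?ltry // => k _; rewrite lee_fin.
apply: filterS (ae_eventually_notin mE' PE') => w [N EN].
by exists N => -[|n] Nn; [ | exact: EN (ltnW Nn)].
Qed.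
End borel_cantelli.

Section flow_exit.
Variables (R : realType) (d : nat) (d0 : measure_display) (Omega : measurableType d0).
Variables (phi : R -> 'rV[R]_d -> Omega -> 'rV[R]_d) (tau : 'rV[R]_d -> Omega -> \bar R).
Hypothesis flow : flow_properties phi tau.
Variable w : Omega.

Lemma tauK_le_tau K x : K x -> (tauK tau K w <= tau x w)%E.
Proof. by move=> Kx; apply: ereal_inf_lbound; exists x. Qed.

Lemma tauK_ge0 K : (0 <= tauK tau K w)%E.
Proof.
have [tau_gt0 _] := flow w.
by apply: le_ereal_inf_tmp => _ [x _ <-]; exact/ltW/tau_gt0.
Qed.

Section bounded_flow.
Variables (K : set 'rV[R]_d) (s M : R).
Hypothesis tauKE : tauK tau K w = s%:E.
Hypothesis phi_le : forall t x, 0 <= t -> t < s -> K x -> `|phi t x w| <= M.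

Lemma tauK_lt_tau x : K x -> (s%:E < tau x w)%E.
Proof.
move=> Kx; have := tauK_le_tau Kx; rewrite tauKE le_eqVlt => /orP[/eqP tauxE|//].
have [_ [_ [_ blowup]]] := flow w.
have taux_fin : (tau x w < +oo)%E by rewrite -tauxE ltry.
have [t [t0 _ ttau Mt]] := blowup x taux_fin M 1 ltr01.
by move: Mt; rewrite ltNge phi_le // -lte_fin tauxE.
Qed.

(* By continuity, phi stays within 1 of phi(s, x) near (s, x), while below
   time s it is bounded by M; so phi(., y) cannot blow up before s + e. *)
Lemma tau_ge_near x : K x ->
  exists2 e, 0 < e & forall y, K y -> ball x e y -> ((s + e)%:E <= tau y w)%E.
Proof.
move=> Kx; have [_ [_ [cont blowup]]] := flow w.
have s0 : 0 <= s by rewrite -lee_fin -tauKE tauK_ge0.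
pose g p := phi p.1 p.2 w : 'rV[R]_d.
have Dsx : 0 <= (s, x).1 /\ ((s, x).1%:E < tau (s, x).2 w)%E.
  by split => //; exact: tauK_lt_tau.
move/subspace_continuousP: cont => /(_ _ Dsx (ball (g (s, x)) 1)).
move=> /(_ (nbhsx_ballx (g (s, x)) 1 ltr01)) /nbhs_ballP [e /= e0 near_g].
exists e => // y Ky xy; rewrite leNgt; apply/negP => tauy_lt.
have tauy_fin : (tau y w < +oo)%E by apply: lt_trans tauy_lt (ltry _).
have [t [t0 _ ttau Bt]] := blowup y tauy_fin (Num.max M (`|g (s, x)| + 1)) 1 ltr01.
move: Bt; apply/negP; rewrite -leNgt le_max.
have [ts|st] := ltP t s; first by rewrite phi_le.
have st_ball : ball (s, x) e (t, y).
  split => //=; rewrite /ball /= distrC ger0_norm ?subr_ge0 // ltrBlDl.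
  by rewrite -lte_fin (lt_trans ttau).
have := near_g (t, y) st_ball (conj t0 ttau); rewrite -ball_normE /= => gt_near.
apply/orP; right; rewrite -[phi t y w](subKr (g (s, x))).
by rewrite (le_trans (ler_normB _ _)) // lerD2l ltW.
Qed.

End bounded_flow.

Lemma flow_unbounded_before_tauK K s M : compact K -> tauK tau K w = s%:E ->
  ~ (forall t x, 0 <= t -> t < s -> K x -> `|phi t x w| <= M).
Proof.
move=> cK tauKE phi_le.
have tau_ge : \forall e \near 0^'+, K `<=` (fun y => ((s + e)%:E <= tau y w)%E).
  apply: ((near_covering_withinP K).2 ((compact_near_coveringP K).1 cK)) => x Kx.
  have [e e0 tau_ge] := tau_ge_near tauKE phi_le Kx.
  exists (ball x e, [set e' | e' <= e]); first split => /=.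
  - exact: nbhsx_ballx.
  - exact: nbhs_right_le.
  move=> [y e'] [/= xy e'e] Ky.
  by apply: le_trans (tau_ge y Ky xy); rewrite lee_fin lerD2l.
have [e [/= e0 tau_ge_e]] := filter_ex (filterI (nbhs_right_gt 0) tau_ge).
have : ((s + e)%:E <= tauK tau K w)%E.
  by apply: le_ereal_inf_tmp => _ [x Kx <-]; exact: tau_ge_e.
by rewrite tauKE lee_fin gerDl leNgt e0.
Qed.

End flow_exit.

Section exit_times.
Variables (R : realType) (d : nat) (d0 : measure_display) (Omega : measurableType d0).
Variables (phi : R -> 'rV[R]_d -> Omega -> 'rV[R]_d) (tau : 'rV[R]_d -> Omega -> \bar R).
Variable U : nat -> set 'rV[R]_d.
Hypotheses (flow : flow_properties phi tau) (exhaust : exhaustion U).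

Lemma exists_exit K n w : compact K -> (0 < n)%N -> (tauK tau K w < +oo)%E ->
  exists t x, [/\ 0 < t, (t%:E < tauK tau K w)%E, K x & ~ U n (phi t x w)].
Proof.
move=> cK n0 tauK_fin.
have tauKE : tauK tau K w = (fine (tauK tau K w))%:E.
  by rewrite fineK // ge0_fin_numE // (tauK_ge0 flow).
apply: contrapT => no_exit.
have [_ [MU [_ MU_ub]] _] := exhaust.1 n n0.
have [MK [_ MK_ub]] := compact_bounded cK.
apply: (flow_unbounded_before_tauK flow cK tauKE (M := Num.max (MU + 1) (MK + 1))).
move=> t x t0 ts Kx; rewrite le_max; apply/orP.
have [->|t_neq0] := eqVneq t 0.
  by have [_ [-> _]] := flow w; right; apply: MK_ub => //; rewrite ltrDl.
left; apply: MU_ub; first by rewrite ltrDl.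
apply: contrapT => notU; apply: no_exit; exists t, x; split => //.
- by rewrite lt_neqAle eq_sym t_neq0.
- by rewrite tauKE lte_fin.
Qed.

Lemma exitK_ge0 K m w : (0 <= exitK phi tau U K m w)%E.
Proof.
case: m => [|m] //=.
by apply: le_ereal_inf_tmp => _ [t [t0 _] <-]; rewrite lee_fin ltW.
Qed.

Lemma exitK_le_tauK K m w : compact K -> (tauK tau K w < +oo)%E ->
  (exitK phi tau U K m w <= tauK tau K w)%E.
Proof.
case: m => [|m] cK tauK_fin /=; first exact: (tauK_ge0 flow).
have [t [x [t0 ttau Kx notU]]] := exists_exit cK (ltn0Sn m) tauK_fin.
apply/ltW/(le_lt_trans _ ttau); apply: ereal_inf_lbound.
by exists t => //; split => //; split => //; exists x.
Qed.

Lemma ae_tauK_pinfty (P : probability Omega R) K : compact K ->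
  hyp_i P phi tau U K -> {ae P, forall w, tauK tau K w = +oo%E}.
Proof.
move=> cK [a [b [a0 b0 asum bsum hypE]]].
have /choice [E EP] : forall n, exists E : set Omega, (0 < n)%N ->
    [/\ measurable E,
        [set w | (exitK phi tau U K n w - exitK phi tau U K n.-1 w <= (a n)%:E)%E
                 /\ (exitK phi tau U K n.-1 w < +oo)%E] `<=` E &
        (P E <= (b n)%:E)%E].
  move=> n; have [->|n0] := posnP n; first by exists set0.
  by have [E ?] := hypE n n0; exists E.
have E_le n : (0 < n)%N -> measurable (E n) /\ (P (E n) <= (b n)%:E)%E.
  by move=> n0; have [] := EP n n0.
apply: filterS (ae_eventually_notin_le b0 bsum E_le) => w [N notE].
apply: contrapT => /eqP; rewrite -ltey => tauK_fin.
pose f m := fine (exitK phi tau U K m w).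
have fE m : exitK phi tau U K m w = (f m)%:E.
  rewrite /f fineK // ge0_fin_numE ?exitK_ge0 //.
  exact: le_lt_trans (exitK_le_tauK _ cK tauK_fin) tauK_fin.
have f_le m : f m <= fine (tauK tau K w).
  by rewrite -lee_fin -fE fineK ?exitK_le_tauK // ge0_fin_numE ?(tauK_ge0 flow).
have f_incr n : (N < n)%N -> a n <= f n - f n.-1.
  move=> Nn; rewrite leNgt; apply/negP => f_lt; apply: (notE n Nn).
  have [_ + _] := EP n (leq_ltn_trans (leq0n N) Nn); apply; split.
    by rewrite !fE -EFinD lee_fin ltW.
  by rewrite fE ltry.
by have := nneseries_le_increments_lty a0 f_le f_incr; rewrite asum ltxx.
Qed.

End exit_times.

Lemma ae_le_nneseries_lty d (Omega : measurableType d) (R : realType)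
    (P : probability Omega R) (tK : Omega -> \bar R) (a b : nat -> R)
    (T : nat -> Omega -> R) :
  (forall n, 0 <= a n) -> (forall n, 0 <= b n) ->
  (\sum_(1 <= n <oo) (a n)%:E < +oo)%E -> (\sum_(1 <= n <oo) (b n)%:E < +oo)%E ->
  (forall n, (0 < n)%N -> measurable_fun setT (T n)) ->
  (forall n w, (0 < n)%N -> 0 <= T n w) ->
  (forall w, (tK w <= \sum_(1 <= j <oo) (T j w)%:E)%E) ->
  (forall n, (0 < n)%N -> (P [set w | (a n <= T n w)%R] <= (b n)%:E)%E) ->
  {ae P, forall w, (tK w < +oo)%E}.
Proof.
move=> a0 b0 asum bsum mT T0 tK_le PT.
have E_le n : (0 < n)%N ->
    measurable [set w | a n <= T n w] /\ (P [set w | (a n <= T n w)%R] <= (b n)%:E)%E.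
  move=> n0; split; last exact: PT.
  have := mT n n0 measurableT `[a n, +oo[%classic (measurable_itv _).
  by rewrite setTI; congr measurable; apply/seteqP; split => w /=;
    rewrite in_itv /= andbT.
apply: filterS (ae_eventually_notin_le b0 bsum E_le) => w [N notE].
apply: le_lt_trans (tK_le w) _.
apply: (nneseries_eventually_le_lty (N := N) _ a0 _ asum) => [n n0|n Nn].
  exact: T0.
by apply/ltW; rewrite ltNge; apply/negP; exact: notE.
Qed.

Lemma ae_tauK_strongly_complete (R : realType) (d : nat) (d0 : measure_display)
    (Omega : measurableType d0) (P : probability Omega R)
    (tau : 'rV[R]_d -> Omega -> \bar R) :
  (forall K, compact K -> {ae P, forall w, tauK tau K w = +oo%E}) ->
  strongly_complete P tau.
Proof.
move=> ae_tauK.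
pose ball_ m := closed_ball_ Num.norm (0 : 'rV[R]_d) m%:R.
have ball_compact m : compact (ball_ m).
  apply: bounded_closed_compact; last exact: closed_closed_ball_.
  exists m%:R; split; first exact: num_real.
  move=> M mM y; rewrite /ball_ /closed_ball_ /= sub0r normrN => ym.
  exact: le_trans ym (ltW mM).
have [N [mN PN0 notN]] := ae_foralln (fun m => ae_tauK _ (ball_compact m)).
exists (~` N); split; first exact: measurableC.
  by rewrite probability_setC // PN0 sube0.
move=> x w Nw; apply/eqP; rewrite -leye_eq.
have <- : tauK tau (ball_ (Num.truncn `|x|).+1) w = +oo%E.
  by apply: contrapT => ?; apply: Nw; apply: notN.
apply: tauK_le_tau; rewrite /ball_ /closed_ball_ /= sub0r normrN.
exact/ltW/truncnS_gt.
Qed.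

Theorem mainTheorem3 (R : realType) (d : nat) (d0 : measure_display)
  (Omega : measurableType d0) (P : probability Omega R)
  (phi : R -> 'rV[R]_d -> Omega -> 'rV[R]_d) (tau : 'rV[R]_d -> Omega -> \bar R)
  (U : nat -> set 'rV[R]_d) :
  flow_properties phi tau -> exhaustion U ->
  (* (i) *)
  (forall K : set 'rV[R]_d, compact K -> hyp_i P phi tau U K ->
     {ae P, forall w, tauK tau K w = +oo%E}) /\
  ((forall K : set 'rV[R]_d, compact K -> hyp_i P phi tau U K) ->
     strongly_complete P tau) /\
  (* (ii) *)
  (forall (K : set 'rV[R]_d), compact K ->
   forall (a b : nat -> R) (T : nat -> Omega -> R),
     (forall n, 0 <= a n) -> (forall n, 0 <= b n) ->
     (\sum_(1 <= n <oo) (a n)%:E < +oo)%E ->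
     (\sum_(1 <= n <oo) (b n)%:E < +oo)%E ->
     (forall n, (0 < n)%N -> measurable_fun setT (T n)) ->
     (forall n w, (0 < n)%N -> 0 <= T n w) ->
     (forall w, (tauK tau K w <= \sum_(1 <= j <oo) (T j w)%:E)%E) ->
     (forall n, (0 < n)%N -> (P [set w | (a n <= T n w)%R] <= (b n)%:E)%E) ->
     {ae P, forall w, (tauK tau K w < +oo)%E}).
Proof.
move=> flow exhaust; split; first exact: ae_tauK_pinfty.
split; last by move=> K _; exact: ae_le_nneseries_lty.
move=> hyp; apply: ae_tauK_strongly_complete => K cK.
exact: ae_tauK_pinfty (hyp K cK).
Qed.
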